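(* Let $f:\mathbb{R}^d\to\mathcal{Y}$ be a classifier (deterministic or randomized), let $x'\in\mathbb{R}^d$, let $y\in\mathcal{Y}$ be the ground-truth label, and let $\epsilon$ be a random noise vector in $\mathbb{R}^d$ drawn from a continuous probability density $\varphi(\cdot,\boldsymbol{\kappa})$ with mean $0$. Let $p\in(0,1)$ be an attack-success-probability threshold and let $\underline{p_{adv}}$ be a number satisfying $$\mathbb{P}_{\epsilon}[f(x'+\epsilon)\neq y]\ \geq\ \underline{p_{adv}}\ \geq\ p .$$ For a shifting vector $\delta\in\mathbb{R}^d$, let $\Phi_-$ denote the cumulative distribution function of the real random variable $\frac{\varphi(\epsilon-\delta,\boldsymbol{\kappa})}{\varphi(\epsilon,\boldsymbol{\kappa})}$ and $\Phi_-^{-1}$ its inverse, and let $\Phi_+$ denote the cumulative distribution function of the real random variable $\frac{\varphi(\epsilon,\boldsymbol{\kappa})}{\varphi(\epsilon+\delta,\boldsymbol{\kappa})}$ (both with $\epsilon\sim\varphi(\cdot,\boldsymbol{\kappa})$). Then for every $\delta$ satisfying $$\Phi_+\big[\Phi_-^{-1}(\underline{p_{adv}})\big]\geq p,$$ it holds that $\mathbb{P}_{\epsilon}[f(x'+\delta+\epsilon)\neq y]\geq p$.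
   Context: $\varphi(\cdot,\boldsymbol{\kappa})$ denotes a zero-mean noise density on $\mathbb{R}^d$ with parameters $\boldsymbol{\kappa}$ (e.g. Gaussian, Laplace, Cauchy, generalized normal); adding $\epsilon\sim\varphi(\cdot,\boldsymbol{\kappa})$ to a point $x'$ gives the ''adversarial distribution'' $\varphi(x',\boldsymbol{\kappa})$ centered at $x'$, and $x'+\delta+\epsilon$ is the shifted distribution $\varphi(x'+\delta,\boldsymbol{\kappa})$. In the paper, $\underline{p_{adv}}$ is a lower bound on the misclassification probability of samples from $\varphi(x',\boldsymbol{\kappa})$, obtained by Monte Carlo querying. *)

From HB Require Import structures.
From mathcomp Require Import all_boot all_order all_algebra.
From mathcomp Require Import all_classical all_reals all_analysis.
Set Implicit Arguments. Unset Strict Implicit. Unset Printing Implicit Defensive.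
Import Order.TTheory GRing.Theory Num.Theory.
Import numFieldNormedType.Exports.
Local Open Scope classical_set_scope.
Local Open Scope ring_scope.

(* R^d is modelled as row vectors 'rV[R]_d; the coordinate i of x is x 0 i. *)

Definition Rd (R : realType) (d : nat) :=
  g_sigma_algebraType (@open 'rV[R]_d).

(* [lam] is the Lebesgue measure on R^d: it gives every half-open box its
   volume (this property characterizes Lebesgue measure on the Borel sets);
   translation invariance of Lebesgue measure is recorded explicitly too. *)
Definition is_lebesgue_measure (R : realType) (d : nat)
    (lam : {measure set (Rd R d) -> \bar R}) : Prop :=
  (forall a b : 'rV[R]_d, (forall i, a 0 i <= b 0 i) ->
      lam [set x : Rd R d | forall i, a 0 i < (x : 'rV[R]_d) 0 i <= b 0 i]
      = (\prod_(i < d) (b 0 i - a 0 i))%:E) /\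
  (forall (A : set (Rd R d)) (v : 'rV[R]_d), measurable A ->
      lam [set ((x : 'rV[R]_d) + v : Rd R d) | x in A] = lam A).

Definition is_zero_mean_cont_density (R : realType) (d : nat)
    (lam : {measure set (Rd R d) -> \bar R}) (phi : 'rV[R]_d -> R) : Prop :=
  [/\ continuous phi,
      (forall z, 0 <= phi z),
      (\int[lam]_(z in [set: Rd R d]) (phi z)%:E = 1)%E &
      (forall i : 'I_d,
         lam.-integrable [set: Rd R d] (fun z : Rd R d => ((z : 'rV[R]_d) 0 i * phi z)%:E)
         /\ (\int[lam]_(z in [set: Rd R d]) ((z : 'rV[R]_d) 0 i * phi z)%:E = 0)%E)].

Definition noise_prob (R : realType) (d : nat)
    (lam : {measure set (Rd R d) -> \bar R}) (phi : 'rV[R]_d -> R)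
    (A : set (Rd R d)) : \bar R :=
  (\int[lam]_(z in A) (phi z)%:E)%E.

(* Ratio of two nonnegative density values, as an extended real;
   a positive quantity divided by 0 is +oo (convention a/0 = +oo). *)
Definition dens_ratio (R : realType) (a b : R) : \bar R :=
  if b == 0 then +oo%E else (a / b)%:E.

Definition Phi_minus (R : realType) (d : nat)
    (lam : {measure set (Rd R d) -> \bar R}) (phi : 'rV[R]_d -> R)
    (delta : 'rV[R]_d) (t : R) : \bar R :=
  noise_prob lam phi
    [set z : Rd R d | (dens_ratio (phi ((z : 'rV[R]_d) - delta)%R) (phi z) <= t%:E)%E].

Definition Phi_plus (R : realType) (d : nat)
    (lam : {measure set (Rd R d) -> \bar R}) (phi : 'rV[R]_d -> R)
    (delta : 'rV[R]_d) (t : R) : \bar R :=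
  noise_prob lam phi
    [set z : Rd R d | (dens_ratio (phi z) (phi ((z : 'rV[R]_d) + delta)%R) <= t%:E)%E].

(* A (possibly randomized) classifier f : R^d -> Y is a probability kernel:
   f x is the distribution of the label output on input x (a deterministic
   classifier g is the kernel x |-> dirac (g x)).
   misclass_prob = P_eps[f(x + eps) <> y], eps ~ phi. *)
Definition misclass_prob (R : realType) (d : nat)
    (lam : {measure set (Rd R d) -> \bar R}) (phi : 'rV[R]_d -> R)
    dY (Y : measurableType dY) (f : R.-pker (Rd R d) ~> Y)
    (x : 'rV[R]_d) (y : Y) : \bar R :=
  (\int[lam]_(z in [set: Rd R d]) ((phi z)%:E * f ((x + (z : 'rV[R]_d))%R : Rd R d) (~` [set y])))%E.

From HB Require Import structures.
From mathcomp Require Import all_boot all_order all_algebra.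
From mathcomp Require Import all_classical all_reals all_analysis.
From mathcomp Require Import measurable_realfun lra.
Import Order.TTheory GRing.Theory Num.Theory.
Import numFieldNormedType.Exports.
Local Open Scope classical_set_scope.
Local Open Scope ring_scope.

(* Write a(e) = phi(e - delta), b(e) = phi(e), K(e) = P[f(x' + e) <> y] in [0, 1]
   and S = {a / b <= t}.  Then Phi_-(t) = int_S b = padv <= int b K, and the
   change of variables e |-> e + delta turns Phi_+(t) into int_S a and
   P[f(x' + delta + e) <> y] into int a K.  The Neyman-Pearson argument gives
   int_S a <= int a K: pointwise (1_S - K)(a - t b) <= 0, hence
   int_S a - int a K <= t (int_S b - int b K) <= 0, using t >= 0 (for t < 0 the
   set S is empty and padv = 0 < p).  Only continuity (for measurability) and
   nonnegativity of phi and translation invariance of lam are used. *)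

Section open_generated.
Context {T : ptopologicalType}.
Local Notation borelT := (g_sigma_algebraType (@open T)).

Lemma continuous_measurable_funR {R : realType} {h : T -> R} :
  continuous h -> measurable_fun [set: borelT] (h : borelT -> R).
Proof.
move=> /continuousP hc; apply: (measurability _ (RGenOpens.measurableE R)).
move=> _ [_ [a [b ->]] <-]; apply: sub_sigma_algebra; rewrite setTI.
exact/hc/interval_open.
Qed.

Lemma continuous_measurable_fun_open {U : ptopologicalType} {h : T -> U} :
  continuous h ->
  measurable_fun [set: borelT] (h : borelT -> g_sigma_algebraType (@open U)).
Proof.
move=> /continuousP hc.
apply: (@measurability _ _ borelT (g_sigma_algebraType (@open U)) setT h (@open U)) => //.
move=> _ [B oB <-]; apply: sub_sigma_algebra; rewrite setTI.
exact/hc.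
Qed.

End open_generated.

Section neyman_pearson.
Context d (T : measurableType d) (R : realType) (mu : {measure set T -> \bar R}).
Variables (a b : T -> R) (K : T -> \bar R) (S : set T) (t : R).
Hypotheses (ma : measurable_fun setT a) (mb : measurable_fun setT b)
  (mK : measurable_fun setT K) (mS : measurable S).
Hypotheses (a0 : forall x, 0 <= a x) (b0 : forall x, 0 <= b x)
  (K0 : forall x, (0 <= K x)%E) (K1 : forall x, (K x <= 1)%E) (t0 : 0 <= t).
Hypotheses (abS : forall x, S x -> a x <= t * b x)
  (abNS : forall x, ~ S x -> t * b x <= a x).

Local Notation A := (EFin \o a).
Local Notation B := (EFin \o b).

Lemma neyman_pearson_pointwise x :
  ((A \_ S) x + t%:E * (B x * K x) <= A x * K x + t%:E * (B \_ S) x)%E.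
Proof.
have Kfin : K x \is a fin_num by rewrite ge0_fin_numE // (le_lt_trans (K1 x)) ?ltey.
have := K0 x; have := K1 x; rewrite -(fineK Kfin) !lee_fin.
move: (fine (K x)) => k k1 k0; rewrite /patch /=.
case: ifPn => [/set_mem /abS abx | /negP nSx]; rewrite -!EFinM -!EFinD lee_fin.
- have : 0 <= (1 - k) * (t * b x - a x) by apply: mulr_ge0; lra.
  nra.
- have abx := abNS x (fun Sx => nSx (mem_set Sx)).
  have : 0 <= k * (a x - t * b x) by apply: mulr_ge0; lra.
  nra.
Qed.

Let mA : measurable_fun setT A. Proof. exact/measurable_EFinP. Qed.
Let mB : measurable_fun setT B. Proof. exact/measurable_EFinP. Qed.

Lemma neyman_pearson_integral :
  (\int[mu]_(x in S) (a x)%:E + t%:E * \int[mu]_x ((b x)%:E * K x) <=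
   \int[mu]_x ((a x)%:E * K x) + t%:E * \int[mu]_(x in S) (b x)%:E)%E.
Proof.
have A0 x : (0 <= A x)%E by rewrite lee_fin.
have B0 x : (0 <= B x)%E by rewrite lee_fin.
have mAS : measurable_fun setT (A \_ S).
  exact: (measurable_restrictT _ mS).1 (measurable_funTS mA).
have mBS : measurable_fun setT (B \_ S).
  exact: (measurable_restrictT _ mS).1 (measurable_funTS mB).
have AS0 x : (0 <= (A \_ S) x)%E by apply: erestrict_ge0.
have BS0 x : (0 <= (B \_ S) x)%E by apply: erestrict_ge0.
have BK0 x : (0 <= B x * K x)%E by apply: mule_ge0.
have AK0 x : (0 <= A x * K x)%E by apply: mule_ge0.
have mBK : measurable_fun setT (fun x => B x * K x)%E by exact: emeasurable_funM.
have mAK : measurable_fun setT (fun x => A x * K x)%E by exact: emeasurable_funM.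
have := ge0_le_integral mu measurableT
  (fun x _ => adde_ge0 (AS0 x) (mule_ge0 (lee_tofin t0) (BK0 x)))
  (emeasurable_funD mAS (measurable_funeM _ mBK))
  (emeasurable_funD mAK (measurable_funeM _ mBS))
  (fun x _ => neyman_pearson_pointwise x).
have tBK0 x : (0 <= t%:E * (B x * K x))%E by rewrite mule_ge0 ?lee_fin.
have tBS0 x : (0 <= t%:E * (B \_ S) x)%E by rewrite mule_ge0 ?lee_fin.
rewrite !ge0_integralD // ?ge0_integralZl_EFin -?integral_mkcond //.
- exact: measurable_funeM mBK.
- exact: measurable_funeM mBS.
Qed.

Lemma neyman_pearson :
  (\int[mu]_(x in S) (b x)%:E)%E \is a fin_num ->
  (\int[mu]_(x in S) (b x)%:E <= \int[mu]_x ((b x)%:E * K x))%E ->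
  (\int[mu]_(x in S) (a x)%:E <= \int[mu]_x ((a x)%:E * K x))%E.
Proof.
move=> BSfin BS_le_BK.
rewrite -(@leeD2rE _ (t%:E * \int[mu]_(x in S) (b x)%:E)%E) ?fin_numM //.
apply: le_trans neyman_pearson_integral; apply: leeD2l.
by apply: lee_wpmul2l; rewrite ?lee_fin.
Qed.

End neyman_pearson.

Lemma continuous_addr {K : numFieldType} {V : normedModType K} (v : V) :
  continuous (fun x : V => x + v).
Proof. by move=> x; apply: continuousD => //; exact: cst_continuous. Qed.

Lemma continuous_addl {K : numFieldType} {V : normedModType K} (v : V) :
  continuous (fun x : V => v + x).
Proof. by move=> x; apply: continuousD => //; exact: cst_continuous. Qed.

Section translation_invariance.
Context {R : realType} {n : nat} {lam : {measure set (Rd R n) -> \bar R}}.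
Hypothesis lam_shift : forall (A : set (Rd R n)) (v : 'rV[R]_n),
  measurable A -> lam [set ((x : 'rV[R]_n) + v : Rd R n) | x in A] = lam A.

Lemma ge0_integral_translation (v : 'rV[R]_n) (h : Rd R n -> \bar R) :
  measurable_fun setT h -> (forall x, (0 <= h x)%E) ->
  (\int[lam]_x h x = \int[lam]_z h (((z : 'rV[R]_n) + v)%R : Rd R n))%E.
Proof.
move=> mh h0.
have mshift := continuous_measurable_fun_open (continuous_addr v).
rewrite -[RHS](ge0_integral_pushforward mshift lam measurableT mh) ?preimage_setT //.
apply: eq_measure_integral => A mA _; rewrite /pushforward -(lam_shift _ (- v) mA).
congr (lam _); apply/seteqP; split => [x [z Az <-]|x Ax] /=; first by rewrite subrK.
by exists (x + v); rewrite ?addrK.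
Qed.

End translation_invariance.

Lemma dens_ratio_leE {R : realType} (a b t : R) : 0 <= b ->
  (dens_ratio a b <= t%:E)%E = (b != 0) && (a <= t * b).
Proof.
rewrite /dens_ratio le0r => /predU1P[->|b_gt0]; first by rewrite eqxx leye_eq.
by rewrite gt_eqF // lee_fin ler_pdivrMr.
Qed.

Definition lr_set {R : realType} {n : nat} (phi : 'rV[R]_n -> R)
    (delta : 'rV[R]_n) (t : R) : set (Rd R n) :=
  [set w : Rd R n | (dens_ratio (phi ((w : 'rV[R]_n) - delta)%R) (phi w) <= t%:E)%E].

Section likelihood_ratio_set.
Context {R : realType} {n : nat} {phi : 'rV[R]_n -> R}.
Variables (delta : 'rV[R]_n) (t : R).
Hypothesis phi_ge0 : forall z, 0 <= phi z.

Lemma lr_setE : lr_set phi delta t =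
  [set w : Rd R n | (phi w != 0) && (phi ((w : 'rV[R]_n) - delta) <= t * phi w)].
Proof. by apply/seteqP; split => w; rewrite /lr_set /= dens_ratio_leE. Qed.

Lemma lr_set_le w : lr_set phi delta t w -> phi ((w : 'rV[R]_n) - delta) <= t * phi w.
Proof. by rewrite lr_setE => /andP[]. Qed.

Lemma lr_setC_ge w : ~ lr_set phi delta t w -> t * phi w <= phi ((w : 'rV[R]_n) - delta).
Proof.
rewrite lr_setE /= => /negP; rewrite negb_and negbK => /orP[/eqP->|].
  by rewrite mulr0.
by rewrite -ltNge => /ltW.
Qed.

Lemma lr_set0 : t < 0 -> lr_set phi delta t = set0.
Proof.
move=> t_lt0; rewrite lr_setE; apply/seteqP; split => // w /andP[phiw0 le_t].
have phiw_gt0 : 0 < phi w by rewrite lt0r phiw0 phi_ge0.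
have := phi_ge0 ((w : 'rV[R]_n) - delta); nra.
Qed.

Lemma measurable_lr_set : continuous phi -> measurable (lr_set phi delta t).
Proof.
move=> phi_cont; rewrite lr_setE.
have mphi : measurable_fun [set: Rd R n] (phi : Rd R n -> R).
  exact: continuous_measurable_funR.
have mphi_delta : measurable_fun [set: Rd R n] (fun w : Rd R n => phi ((w : 'rV[R]_n) - delta)).
  exact: measurableT_comp mphi (continuous_measurable_fun_open (continuous_addr (- delta))).
have mtest : measurable_fun [set: Rd R n]
    (fun w : Rd R n => (phi w != 0) && (phi ((w : 'rV[R]_n) - delta) <= t * phi w)).
  apply: measurable_and; first by apply: measurable_neg; exact: measurable_fun_eqr.
  by apply: measurable_fun_ler => //; exact: measurable_funM.
by have := mtest measurableT [set true] I; rewrite setTI.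
Qed.

End likelihood_ratio_set.

Lemma measurable_kernel_translate {R : realType} {n : nat} {dY : measure_display}
    {Y : measurableType dY} (f : R.-ker (Rd R n) ~> Y) (x : 'rV[R]_n) (C : set Y) :
  measurable C -> measurable_fun [set: Rd R n] (fun w : Rd R n => f ((x + w)%R : Rd R n) C).
Proof.
move=> mC; apply: measurableT_comp (measurable_kernel f _ mC) _.
exact: continuous_measurable_fun_open (continuous_addl x).
Qed.

Lemma prob_kernel_le1 {d d' : measure_display} {X : measurableType d}
    {Y : measurableType d'} {R : realType} (f : R.-pker X ~> Y) (x : X) (A : set Y) :
  measurable A -> (f x A <= 1)%E.
Proof. by move=> mA; rewrite -(@prob_kernel _ _ _ _ _ f x); apply: le_measure; rewrite ?inE. Qed.

Section shifted_noise.
Context {R : realType} {n : nat} {lam : {measure set (Rd R n) -> \bar R}}.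
Context {phi : 'rV[R]_n -> R}.
Hypothesis lam_shift : forall (A : set (Rd R n)) (v : 'rV[R]_n),
  measurable A -> lam [set ((x : 'rV[R]_n) + v : Rd R n) | x in A] = lam A.
Hypotheses (phi_cont : continuous phi) (phi_ge0 : forall z, 0 <= phi z).

Let mphi : measurable_fun [set: Rd R n] (phi : Rd R n -> R).
Proof. exact: continuous_measurable_funR. Qed.

Lemma measurable_phi_shift (v : 'rV[R]_n) :
  measurable_fun [set: Rd R n] (fun w : Rd R n => phi ((w : 'rV[R]_n) + v)).
Proof. exact: measurableT_comp mphi (continuous_measurable_fun_open (continuous_addr v)). Qed.

Lemma Phi_plus_lr_setE (delta : 'rV[R]_n) (t : R) :
  Phi_plus lam phi delta t =
  (\int[lam]_(w in lr_set phi delta t) (phi ((w : 'rV[R]_n) - delta))%:E)%E.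
Proof.
rewrite /Phi_plus /noise_prob [LHS]integral_mkcond [RHS]integral_mkcond.
rewrite [RHS](ge0_integral_translation lam_shift delta); last 2 first.
- have mS := measurable_lr_set delta t phi_ge0 phi_cont.
  have mA : measurable_fun [set: Rd R n] (fun w : Rd R n => (phi ((w : 'rV[R]_n) - delta))%:E).
    exact: measurableT_comp (measurable_phi_shift (- delta)).
  exact: (measurable_restrictT _ mS).1 (measurable_funTS mA).
- by move=> w; apply: erestrict_ge0 => z _; rewrite lee_fin.
apply: eq_integral => z _; rewrite /patch addrK; congr (if _ then _ else _).
by apply/idP/idP => /set_mem H; apply/mem_set; move: H; rewrite /lr_set /= addrK.
Qed.

Lemma Phi_minus_lr_setE (delta : 'rV[R]_n) (t : R) :
  Phi_minus lam phi delta t = (\int[lam]_(w in lr_set phi delta t) (phi w)%:E)%E.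
Proof. by []. Qed.

Lemma Phi_minus_lt0 (delta : 'rV[R]_n) (t : R) :
  t < 0 -> Phi_minus lam phi delta t = 0%E.
Proof. by move=> t_lt0; rewrite Phi_minus_lr_setE lr_set0 // integral_set0. Qed.

Lemma misclass_prob_translation {dY : measure_display} {Y : measurableType dY}
    (f : R.-pker (Rd R n) ~> Y) (x delta : 'rV[R]_n) (y : Y) :
  measurable [set y] ->
  misclass_prob lam phi f (x + delta) y =
  (\int[lam]_w ((phi ((w : 'rV[R]_n) - delta))%:E * f ((x + w)%R : Rd R n) (~` [set y])))%E.
Proof.
move=> my; rewrite [RHS](ge0_integral_translation lam_shift delta); last 2 first.
- apply: emeasurable_funM; first exact: measurableT_comp (measurable_phi_shift (- delta)).
  exact: measurable_kernel_translate (measurableC my).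
- by move=> w; rewrite mule_ge0 ?lee_fin.
by apply: eq_integral => z _; rewrite addrK (addrC z) addrA.
Qed.

Lemma Phi_plus_le_misclass_prob {dY : measure_display} {Y : measurableType dY}
    (f : R.-pker (Rd R n) ~> Y) (x delta : 'rV[R]_n) (y : Y) (t : R) :
  measurable [set y] -> 0 <= t ->
  Phi_minus lam phi delta t \is a fin_num ->
  (Phi_minus lam phi delta t <= misclass_prob lam phi f x y)%E ->
  (Phi_plus lam phi delta t <= misclass_prob lam phi f (x + delta) y)%E.
Proof.
move=> my t_ge0 Phi_minus_fin Phi_minus_le.
rewrite Phi_plus_lr_setE misclass_prob_translation //.
apply: (@neyman_pearson _ _ _ lam (fun w : Rd R n => phi ((w : 'rV[R]_n) - delta)) phi
  _ _ t) => //.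
- exact: measurable_phi_shift.
- exact: measurable_kernel_translate (measurableC my).
- exact: measurable_lr_set.
- by move=> w; apply: prob_kernel_le1; exact: measurableC.
- exact: lr_set_le.
- exact: lr_setC_ge.
Qed.

End shifted_noise.

Theorem theorem1 (R : realType) (d : nat)
    (lam : {measure set (Rd R d) -> \bar R}) (phi : 'rV[R]_d -> R)
    (dY : measure_display) (Y : measurableType dY)
    (f : R.-pker (Rd R d) ~> Y) (x' : 'rV[R]_d) (y : Y) (p padv : R) :
  is_lebesgue_measure lam ->
  is_zero_mean_cont_density lam phi ->
  measurable [set y] ->
  0 < p < 1 ->
  (misclass_prob lam phi f x' y >= padv%:E)%E ->
  padv >= p ->
  forall (delta : 'rV[R]_d) (t : R),
    (* t = Phi_-^{-1}(padv) *)
    Phi_minus lam phi delta t = padv%:E ->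
    (Phi_plus lam phi delta t >= p%:E)%E ->
    (misclass_prob lam phi f (x' + delta) y >= p%:E)%E.
Proof.
move=> [_ lam_shift] [phi_cont phi_ge0 _ _] my /andP[p_gt0 _] padv_le p_le_padv
  delta t Phi_minus_t Phi_plus_ge.
have t_ge0 : 0 <= t.
  rewrite leNgt; apply/negP => t_lt0.
  move: Phi_minus_t; rewrite Phi_minus_lt0 // => -[padv0].
  by move: p_le_padv; rewrite -padv0 leNgt p_gt0.
apply: le_trans Phi_plus_ge _.
apply: Phi_plus_le_misclass_prob => //; by rewrite Phi_minus_t.
Qed.
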